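(* Let $P\subseteq\mathbb{R}^n$ be a permutation-invariant polytope, $\phi:P\to\mathbb{R}$ a Schur-concave function on $P$, and $\alpha\in\mathbb{R}$. Let $M=\{x\in P\mid$ there is no $u\in P$ with $u\ge_m x$ and $u_\Delta\ne x_\Delta\}$, $S=\{(x,t)\mid\phi(x)\le t\le\alpha,\ x\in P\}$ and $X=\{(x,t)\mid\phi(x)\le t\le\alpha,\ x\in M\}$. Then $\mathrm{conv}(S)=\mathrm{conv}(X)$.
   Context: $P$ is permutation-invariant if $x\in P$ implies $Qx\in P$ for every permutation matrix $Q$. $\phi$ is Schur-concave on $P$ if for all $x,y\in P$, $x\ge_m y$ implies $\phi(x)\le\phi(y)$. $x_{[i]}$ is the $i$-th largest entry; $x\ge_m y$ means $\sum_{i=1}^j x_{[i]}\ge\sum_{i=1}^j y_{[i]}$ for $j<n$ with equality for $j=n$. For $x\in\mathbb{R}^n$, $x_\Delta\in\mathbb{R}^n$ is the vector $(x_{[1]},\dots,x_{[n]})$ (entries sorted nonincreasingly). *)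

From HB Require Import structures.
From mathcomp Require Import all_boot all_order all_algebra all_fingroup.
Set Implicit Arguments. Unset Strict Implicit. Unset Printing Implicit Defensive.
Import Order.TTheory GRing.Theory Num.Theory.
Local Open Scope ring_scope.

Section Defs.
Variable R : realFieldType.

Definition sortdesc n (x : 'rV[R]_n) : seq R :=
  sort (fun a b : R => b <= a) [seq x 0 i | i <- enum 'I_n].

(* x_[i] (0-based: x_[i+1] in the paper) *)
Definition xbr n (x : 'rV[R]_n) (i : nat) : R := nth 0 (sortdesc x) i.

Definition topsum n (x : 'rV[R]_n) (j : nat) : R := \sum_(i < j) xbr x i.

Definition majorizes n (x y : 'rV[R]_n) : Prop :=
  (forall j, (j < n)%N -> topsum y j <= topsum x j) /\ topsum x n = topsum y n.

Definition conv (V : lmodType R) (A : V -> Prop) (z : V) : Prop :=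
  exists (k : nat) (l : 'I_k -> R) (p : 'I_k -> V),
    (forall i, 0 <= l i) /\ \sum_(i < k) l i = 1 /\ (forall i, A (p i)) /\
    z = \sum_(i < k) l i *: p i.

Definition polytope n (P : 'rV[R]_n -> Prop) : Prop :=
  exists (k : nat) (v : 'I_k -> 'rV[R]_n),
    forall x, P x <-> conv (fun y => exists i, y = v i) x.

Definition perm_invariant n (P : 'rV[R]_n -> Prop) : Prop :=
  forall (s : 'S_n) x, P x -> P (x *m perm_mx s).

Definition schur_concave_on n (P : 'rV[R]_n -> Prop) (phi : 'rV[R]_n -> R) : Prop :=
  forall x y, P x -> P y -> majorizes x y -> phi x <= phi y.

Definition maj_maximal n (P : 'rV[R]_n -> Prop) (x : 'rV[R]_n) : Prop :=
  P x /\ ~ (exists u, P u /\ majorizes u x /\ sortdesc u <> sortdesc x).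

Definition pt n (x : 'rV[R]_n) (t : R) : 'rV[R]_(n + 1) := row_mx x (const_mx t).

Definition episet n (A : 'rV[R]_n -> Prop) (phi : 'rV[R]_n -> R) (alpha : R)
  (z : 'rV[R]_(n + 1)) : Prop :=
  exists x t, z = pt x t /\ A x /\ phi x <= t /\ t <= alpha.

End Defs.

From HB Require Import structures.
From mathcomp Require Import all_boot all_order all_algebra all_fingroup.
From mathcomp Require Import zify ring lra.
From Stdlib Require Import IndefiniteDescription.
Set Implicit Arguments. Unset Strict Implicit. Unset Printing Implicit Defensive.
Import Order.TTheory GRing.Theory Num.Theory.
Local Open Scope ring_scope.

(* Let (x, t) be in S and let xs be x sorted nonincreasingly. Among the sorted points y of P
   whose prefix sums dominate those of xs (with the same total), pick u maximizing the linear
   form y |-> sum_m (y_1 + ... + y_m). Then u is majorization-maximal in P: a point of P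
   majorizing u is, once sorted, again a candidate, so its prefix sums all equal those of u.
   By Rado's theorem xs is a convex combination of permutations of u; these are
   majorization-maximal as well and majorize x, so by Schur-concavity phi is at most
   phi x <= t on them, and (x, t) lies in conv X.
   The candidate region is a polytope because cutting conv W by a halfspace {0 <= g}, g affine,
   gives the hull of the points of W in the halfspace together with the points where segments
   joining points of W on opposite sides meet {g = 0} (a Fourier-Motzkin step). Rado's theorem
   follows by induction on the number of coordinates where u and xs differ: moving mass between
   two suitable coordinates j < k of u, a convex combination of u and u with j, k swapped,
   matches one more coordinate. *)

Section Hull.
Variables (R : realFieldType) (V : lmodType R).
Implicit Types (A B : V -> Prop) (y : V).

(* [conv] with weights indexed by any finite type, so that a hull of hulls is indexed by a
   dependent pair type. *)
Definition hull A y : Prop :=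
  exists (T : finType) (l : T -> R) (p : T -> V),
    [/\ forall i, 0 <= l i, \sum_i l i = 1, forall i, A (p i) & y = \sum_i l i *: p i].

Lemma convE A y : conv A y <-> hull A y.
Proof.
split=> [[k [l [p [l_ge0 [l_sum1 [pA ->]]]]]]|[T [l [p [l_ge0 l_sum1 pA ->]]]]].
  by exists 'I_k, l, p.
have sum_enum_val (Z : nmodType) (F : T -> Z) : \sum_i F i = \sum_(i < #|T|) F (enum_val i).
  by rewrite -big_enum_val; apply: eq_bigl => i; rewrite inE.
exists #|T|, (l \o enum_val), (p \o enum_val).
split=> [i|]; first exact: l_ge0.
split; first by rewrite -sum_enum_val.
by split=> [i|]; [apply: pA|exact: sum_enum_val (fun i => l i *: p i)].
Qed.

Lemma hull_mem A y : A y -> hull A y.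
Proof.
by move=> Ay; exists 'I_1, (fun _ => 1), (fun _ => y); split; rewrite ?big_ord1 ?scale1r.
Qed.

Lemma sub_hull A B y : (forall a, A a -> B a) -> hull A y -> hull B y.
Proof. by move=> AB [T [l [p [l_ge0 l_sum1 pA ->]]]]; exists T, l, p; split=> // i; apply: AB. Qed.

Lemma hull_witness A y : hull A y -> exists a, A a.
Proof.
move=> [T [l [p [_ l_sum1 pA _]]]]; have [i _|T0] := pickP (@predT T); first by exists (p i).
by move: l_sum1; rewrite big_pred0 // => /eqP; rewrite eq_sym oner_eq0.
Qed.

Lemma hull_segment A a v w : 0 <= a <= 1 -> A v -> A w -> hull A (a *: v + (1 - a) *: w).
Proof.
move=> /andP[a_ge0 a_le1] Av Aw.
exists bool, (fun i => if i then a else 1 - a), (fun i => if i then v else w).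
by split=> [[]||[]|]; rewrite ?big_bool //= ?subr_ge0 ?subrKC.
Qed.

Lemma hull_supp A (T : finType) (l : T -> R) (p : T -> V) :
  (forall i, 0 <= l i) -> \sum_i l i = 1 -> (forall i, l i != 0 -> A (p i)) ->
  hull A (\sum_i l i *: p i).
Proof.
move=> l_ge0 l_sum1 pA.
have [i0 li0] : exists i0, l i0 != 0.
  apply/existsP; apply: contraT; rewrite negb_exists => /forallP l0.
  move: l_sum1; rewrite big1 => [/eqP|i _]; first by rewrite eq_sym oner_eq0.
  by apply/eqP; rewrite -[_ == _]negbK l0.
exists T, l, (fun i => if l i == 0 then p i0 else p i); split=> //.
  by move=> i; case: eqP => [_|/eqP]; apply: pA.
by apply: eq_bigr => i _; case: eqP => // ->; rewrite !scale0r.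
Qed.

Lemma hull_hull A B y : (forall a, A a -> hull B a) -> hull A y -> hull B y.
Proof.
move=> AB [T [l [p [l_ge0 l_sum1 pA ->]]]].
have hullP i : {Ti : finType & {li : Ti -> R & {q : Ti -> V |
   [/\ forall j, 0 <= li j, \sum_j li j = 1, forall j, B (q j) & p i = \sum_j li j *: q j]}}}.
  have [Ti HT] := constructive_indefinite_description _ (AB _ (pA i)).
  have [li Hl] := constructive_indefinite_description _ HT.
  by have [q Hq] := constructive_indefinite_description _ Hl; exists Ti, li, q.
pose Ti i := projT1 (hullP i).
pose li i : Ti i -> R := projT1 (projT2 (hullP i)).
pose q i : Ti i -> V := proj1_sig (projT2 (projT2 (hullP i))).
have [li_ge0 li_sum1 qB pE] : [/\ forall i j, 0 <= li i j, forall i, \sum_j li i j = 1,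
    forall i j, B (q i j) & forall i, p i = \sum_j li i j *: q i j].
  by split=> i; case: (proj2_sig (projT2 (projT2 (hullP i)))).
exists {i : T & Ti i}, (fun t => l (tag t) * li (tag t) (tagged t)),
  (fun t => q (tag t) (tagged t)); split.
- by move=> [i j]; apply: mulr_ge0.
- rewrite -(sig_big_dep (fun _ => true) (fun _ _ => true) (fun i j => l i * li i j)) /= -l_sum1.
  by apply: eq_bigr => i _; rewrite -mulr_sumr li_sum1 mulr1.
- by move=> [i j]; apply: qB.
rewrite -(sig_big_dep (fun _ => true) (fun _ _ => true) (fun i j => (l i * li i j) *: q i j)) /=.
apply: eq_bigr => i _; rewrite pE scaler_sumr.
by apply: eq_bigr => j _; rewrite scalerA.
Qed.

Definition affine (g : V -> R) := forall (T : finType) (l : T -> R) (p : T -> V),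
  \sum_i l i = 1 -> g (\sum_i l i *: p i) = \sum_i l i * g (p i).

Lemma affine_cst c : affine (fun _ => c).
Proof. by move=> T l p l_sum1; rewrite -mulr_suml l_sum1 mul1r. Qed.

Lemma affineB f h : affine f -> affine h -> affine (fun y => f y - h y).
Proof.
move=> fA hA T l p l_sum1; rewrite fA // hA // -sumrB.
by apply: eq_bigr => i _; rewrite mulrBr.
Qed.

Lemma affine_sum (C : finType) (P : pred C) (f : C -> V -> R) :
  (forall c, affine (f c)) -> affine (fun y => \sum_(c | P c) f c y).
Proof.
move=> fA T l p l_sum1.
rewrite (eq_bigr (fun c => \sum_i l i * f c (p i))) => [|c _]; last by rewrite fA.
by rewrite exchange_big; apply: eq_bigr => i _; rewrite mulr_sumr.
Qed.

Lemma hull_affine_ge g A c y : affine g ->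
  (forall a, A a -> c <= g a) -> hull A y -> c <= g y.
Proof.
move=> gA gc [T [l [p [l_ge0 l_sum1 pA ->]]]].
rewrite gA // -[c]mul1r -l_sum1 mulr_suml; apply: ler_sum => i _.
by rewrite ler_wpM2l ?gc.
Qed.

Lemma hull_affine_le g A c y : affine g ->
  (forall a, A a -> g a <= c) -> hull A y -> g y <= c.
Proof.
move=> gA gc; rewrite -subr_ge0; apply: hull_affine_ge (affineB (affine_cst c) gA) _ => a.
by rewrite subr_ge0; apply: gc.
Qed.

End Hull.

Lemma seq_argmax (d : Order.disp_t) (O : orderType d) (T : eqType) (F : T -> O)
  (W : seq T) u0 : u0 \in W ->
  exists2 u, u \in W & forall z, z \in W -> (F z <= F u)%O.
Proof.
move=> u0W; have W_gt0 : (0 < size W)%N by case: W u0W.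
case: (arg_maxP (fun i : 'I_(size W) => F (nth u0 W i)) (isT : xpredT (Ordinal W_gt0))).
move=> i _ imax; exists (nth u0 W i); first by rewrite mem_nth.
by move=> z /(nthP u0) [j jW <-]; apply: (imax (Ordinal jW)).
Qed.

Local Notation hull_seq W := (hull (fun x => x \in W)).

Lemma hull_map (R : realFieldType) (V W : lmodType R) (f : V -> W) A y :
  (forall (T : finType) (l : T -> R) (p : T -> V), \sum_i l i = 1 ->
     f (\sum_i l i *: p i) = \sum_i l i *: f (p i)) ->
  hull A y -> hull (fun w => exists2 a, A a & w = f a) (f y).
Proof.
move=> f_comb [T [l [p [l_ge0 l_sum1 pA ->]]]].
by exists T, l, (f \o p); split=> //= [i|]; [exists (p i)|apply: f_comb].
Qed.

Lemma double_sumZ (R : comNzRingType) (U : lmodType R) (T : finType)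
  (a b c d : T -> R) (x y : T -> U) :
  \sum_i \sum_j (a i * b j) *: (c i *: x j - d j *: y i) =
  (\sum_i a i * c i) *: \sum_j b j *: x j - (\sum_j b j * d j) *: \sum_i a i *: y i.
Proof.
rewrite (eq_bigr (fun i => \sum_j (a i * c i) *: (b j *: x j)
                         - \sum_j (b j * d j) *: (a i *: y i))); last first.
  move=> i _; rewrite -sumrB; apply: eq_bigr => j _.
  by rewrite scalerBr !scalerA; congr (_ *: _ - _ *: _); ring.
rewrite sumrB; congr (_ - _).
  by under eq_bigr do rewrite -scaler_sumr; rewrite -scaler_suml.
by under eq_bigr do rewrite -scaler_suml; rewrite -scaler_sumr.
Qed.

Lemma double_sumM (R : comNzRingType) (T : finType) (a b c d : T -> R) :
  \sum_i \sum_j (a i * b j) * (c i - d j) =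
  (\sum_i a i * c i) * \sum_j b j - (\sum_j b j * d j) * \sum_i a i.
Proof.
rewrite (eq_bigr (fun i => \sum_j (a i * c i) * b j - \sum_j (b j * d j) * a i)); last first.
  by move=> i _; rewrite -sumrB; apply: eq_bigr => j _; ring.
rewrite sumrB; congr (_ - _).
  by under eq_bigr do rewrite -mulr_sumr; rewrite -mulr_suml.
by under eq_bigr do rewrite -mulr_suml; rewrite -mulr_sumr.
Qed.

Section Cut.
Variables (R : realFieldType) (V : lmodType R) (g : V -> R).
Hypothesis gA : affine g.

Lemma affine2 a b v w : a + b = 1 -> g (a *: v + b *: w) = a * g v + b * g w.
Proof.
move=> ab1; have := gA (fun i : bool => if i then v else w) (l := fun i => if i then a else b).
by rewrite !big_bool; apply.
Qed.

(* For [g v > 0 > g w], the point of the segment [v, w] on the hyperplane [g = 0]. *)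
Definition cross v w : V := (g v - g w)^-1 *: (g v *: w - g w *: v).

(* Fourier-Motzkin: generators of [hull W] cut by the halfspace [0 <= g]. *)
Definition cut (W : seq V) : seq V :=
  [seq w <- W | 0 <= g w] ++
  [seq cross v w | v <- [seq v <- W | 0 < g v], w <- [seq w <- W | g w < 0]].

Lemma mem_cut W z : z \in cut W -> hull_seq W z /\ 0 <= g z.
Proof.
rewrite mem_cat => /orP[|].
  by rewrite mem_filter => /andP[gz zW]; split=> //; apply: hull_mem.
move=> /allpairsP[[v w] /= []]; rewrite !mem_filter => /andP[gv vW] /andP[gw wW] ->.
have gvw_gt0 : 0 < g v - g w by lra.
have gvw_neq0 := lt0r_neq0 gvw_gt0.
pose a := - g w / (g v - g w).
have crossE : cross v w = a *: v + (1 - a) *: w.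
  by rewrite /cross scalerBr !scalerA addrC /a -scaleNr; congr (_ *: _ + _ *: _); field.
rewrite crossE; split.
  apply: hull_segment => //; rewrite divr_ge0 ?ler_pdivrMr ?mul1r; lra.
suff -> : g (a *: v + (1 - a) *: w) = 0 by [].
by rewrite affine2 ?subrKC // /a; field.
Qed.

Section SignedCombination.
Variables (W : seq V) (T : finType) (lZ lP lN : T -> R) (p : T -> V).
Hypotheses (lZ_ge0 : forall i, 0 <= lZ i) (lP_ge0 : forall i, 0 <= lP i).
Hypothesis lN_ge0 : forall i, 0 <= lN i.
Hypothesis lZ_supp : forall i, lZ i != 0 -> 0 <= g (p i).
Hypothesis lP_supp : forall i, lP i != 0 -> 0 < g (p i).
Hypothesis lN_supp : forall i, lN i != 0 -> g (p i) < 0.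
Hypotheses (pW : forall i, p i \in W) (l_sum1 : \sum_i (lZ i + lP i + lN i) = 1).

Let A := \sum_i lP i * g (p i).
Let B := - \sum_j lN j * g (p j).

Let weighted_sum_gP : A != 0 -> \sum_i lP i / A * g (p i) = 1.
Proof.
move=> A_neq0; rewrite -[RHS](divff A_neq0) /A mulr_suml.
by apply: eq_bigr => i _; rewrite mulrAC.
Qed.

Lemma cross_decomposition : A != 0 ->
  (forall i j, lP i * lN j != 0 -> g (p i) != g (p j)) ->
  \sum_i lP i *: p i + \sum_j lN j *: p j =
  \sum_i (lP i * (1 - B / A)) *: p i +
  \sum_i \sum_j (lP i / A * lN j * (g (p i) - g (p j))) *: cross (p i) (p j).
Proof.
move=> A_neq0 gPN_neq.
have termE i j : (lP i / A * lN j * (g (p i) - g (p j))) *: cross (p i) (p j)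
    = (lP i / A * lN j) *: (g (p i) *: p j - g (p j) *: p i).
  rewrite /cross scalerA; have [->|] := eqVneq (lP i / A * lN j) 0.
    by rewrite !mul0r !scale0r.
  rewrite !mulf_eq0 invr_eq0 (negPf A_neq0) orbF negb_or => /andP[Pi Nj].
  by rewrite mulfK // subr_eq0 gPN_neq // mulf_neq0.
rewrite (eq_bigr _ (fun i _ => eq_bigr _ (fun j _ => termE i j))) double_sumZ.
rewrite weighted_sum_gP // -[\sum_j lN j * g (p j)]opprK -/B.
rewrite scale1r scaleNr opprK [RHS]addrCA [RHS]addrC; congr (_ + _).
rewrite scaler_sumr -big_split; apply: eq_bigr => i _.
by rewrite /= scalerA -scalerDl; congr (_ *: _); ring.
Qed.

Lemma cross_weights : A != 0 ->
  \sum_i lP i + \sum_j lN j =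
  \sum_i lP i * (1 - B / A) + \sum_i \sum_j lP i / A * lN j * (g (p i) - g (p j)).
Proof.
move=> A_neq0; rewrite double_sumM weighted_sum_gP // -[\sum_j lN j * g (p j)]opprK -/B.
rewrite mul1r (mulNr B) opprK [RHS]addrCA [RHS]addrC; congr (_ + _).
by rewrite mulr_sumr -big_split; apply: eq_bigr => i _ /=; ring.
Qed.

Let cut_ge0 i : 0 <= g (p i) -> p i \in cut W.
Proof. by rewrite mem_cat mem_filter pW => ->. Qed.

Let supp_ge0 i c : lZ i + lP i * c != 0 -> 0 <= g (p i).
Proof.
have [lZ0|/lZ_supp //] := eqVneq (lZ i) 0.
by rewrite lZ0 add0r mulf_eq0 negb_or => /andP[/lP_supp/ltW].
Qed.

Lemma hull_cut_nonneg : (forall i, lN i = 0) ->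
  hull_seq (cut W) (\sum_i (lZ i + lP i + lN i) *: p i).
Proof.
move=> lN0; apply: hull_supp => // [i|i]; first by rewrite !addr_ge0.
by rewrite lN0 addr0 -[lP i]mulr1 => /supp_ge0/cut_ge0.
Qed.

Lemma hull_cut_cross : 0 < A -> B <= A ->
  hull_seq (cut W) (\sum_i (lZ i + lP i + lN i) *: p i).
Proof.
move=> A_gt0 B_le_A; have A_neq0 := lt0r_neq0 A_gt0.
have gPN_lt i j : lP i * lN j != 0 -> g (p j) < g (p i).
  by rewrite mulf_eq0 negb_or => /andP[/lP_supp ? /lN_supp ?]; lra.
pose w (t : T + T * T) : R := match t with
  | inl i => lZ i + lP i * (1 - B / A)
  | inr ij => lP ij.1 / A * lN ij.2 * (g (p ij.1) - g (p ij.2)) end.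
pose q (t : T + T * T) : V := match t with
  | inl i => p i
  | inr ij => cross (p ij.1) (p ij.2) end.
have -> : \sum_i (lZ i + lP i + lN i) *: p i = \sum_t w t *: q t.
  rewrite (eq_bigr (fun i => lZ i *: p i + (lP i *: p i + lN i *: p i))) => [|i _]; last first.
    by rewrite -addrA !scalerDl.
  rewrite !big_split /= cross_decomposition // => [|i j /gPN_lt/gt_eqF -> //].
  rewrite big_sumType /= addrA -big_split.
  rewrite -(pair_big xpredT xpredT (fun i j => w (inr (i, j)) *: q (inr (i, j)))) /=.
  by congr (_ + _); apply: eq_bigr => i _; rewrite scalerDl.
apply: hull_supp.
- case=> [i|[i j]] /=.
    by apply: addr_ge0 => //; apply: mulr_ge0 => //; rewrite subr_ge0 ler_pdivrMr // mul1r.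
  rewrite [lP i / A * _]mulrAC.
  have [->|/gPN_lt gij] := eqVneq (lP i * lN j) 0; first by rewrite !mul0r.
  apply: mulr_ge0; last by rewrite subr_ge0 ltW.
  by apply: divr_ge0; [apply: mulr_ge0|apply: ltW].
- rewrite big_sumType /= -(pair_big xpredT xpredT (fun i j => w (inr (i, j)))) /=.
  by rewrite big_split /= -addrA -cross_weights // -[RHS]l_sum1 !big_split /= addrA.
case=> [i /supp_ge0 /cut_ge0 //|[i j]] /=.
rewrite [lP i / A * _]mulrAC; have [->|] := eqVneq (lP i * lN j) 0.
  by rewrite !mul0r eqxx.
rewrite mulf_eq0 negb_or => /andP[/lP_supp gPi /lN_supp gNj] _.
by rewrite mem_cat; apply/orP; right; apply: allpairs_f; rewrite mem_filter pW andbT.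
Qed.

Lemma hull_cut_signed : 0 <= \sum_i (lP i + lN i) * g (p i) ->
  hull_seq (cut W) (\sum_i (lZ i + lP i + lN i) *: p i).
Proof.
rewrite (eq_bigr _ (fun i _ => mulrDl _ _ _)) big_split /= -/A -[X in _ + X]opprK -/B subr_ge0.
move=> B_le_A; have BN_ge0 j : 0 <= - (lN j * g (p j)).
  rewrite oppr_ge0; have [->|/lN_supp/ltW gj] := eqVneq (lN j) 0; first by rewrite mul0r.
  exact: mulr_ge0_le0.
have B_ge0 : 0 <= B by rewrite /B -sumrN; apply: sumr_ge0 => j _.
have [A0|A_neq0] := eqVneq A 0; last first.
  by apply: hull_cut_cross; rewrite // lt_def A_neq0 (le_trans B_ge0 B_le_A).
apply: hull_cut_nonneg => i.
have /psumr_eq0P : \sum_j - (lN j * g (p j)) = 0 by rewrite sumrN -/B; lra.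
move=> /(_ (fun j _ => BN_ge0 j) i isT) /eqP; rewrite oppr_eq0 mulf_eq0 => /orP[/eqP //|gi0].
by apply/eqP; apply: contraTT gi0 => /lN_supp /lt_eqF ->.
Qed.

End SignedCombination.

Lemma cut_cover W y : hull_seq W y -> 0 <= g y -> hull_seq (cut W) y.
Proof.
move=> [T [l [p [l_ge0 l_sum1 pW ->]]]]; rewrite gA // => gy_ge0.
pose lZ i := if g (p i) == 0 then l i else 0.
pose lP i := if 0 < g (p i) then l i else 0.
pose lN i := if g (p i) < 0 then l i else 0.
have lE i : l i = lZ i + lP i + lN i by rewrite /lZ /lP /lN; case: ltrgtP; rewrite ?addr0 ?add0r.
have lgE i : l i * g (p i) = (lP i + lN i) * g (p i).
  by rewrite /lP /lN; case: ltrgtP => [||<-]; rewrite ?addr0 ?add0r ?mulr0.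
rewrite (eq_bigr (fun i => (lZ i + lP i + lN i) *: p i)) => [|i _]; last by rewrite -lE.
apply: hull_cut_signed => // [i|i|i|i|i|i||].
- by rewrite /lZ; case: ifP.
- by rewrite /lP; case: ifP.
- by rewrite /lN; case: ifP.
- by rewrite /lZ; case: ifP => [/eqP ->|]; rewrite ?eqxx.
- by rewrite /lP; case: ifP; rewrite ?eqxx.
- by rewrite /lN; case: ifP; rewrite ?eqxx.
- by rewrite -l_sum1; apply: eq_bigr => i _; rewrite lE.
by rewrite (eq_bigr _ (fun i _ => lgE i)) in gy_ge0.
Qed.

End Cut.

Lemma hull_halfspaces (R : realFieldType) (V : lmodType R) (C : eqType)
  (gs : C -> V -> R) (cs : seq C) (W : seq V) :
  (forall c, affine (gs c)) ->
  exists W' : seq V,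
    (forall z, z \in W' -> hull_seq W z /\ {in cs, forall c, 0 <= gs c z}) /\
    (forall y, hull_seq W y -> {in cs, forall c, 0 <= gs c y} -> hull_seq W' y).
Proof.
move=> gsA; elim: cs W => [|c cs IH] W.
  by exists W; split=> [z zW|//]; split=> //; apply: hull_mem.
have [W' [W'_sub W'_cover]] := IH (cut (gs c) W).
exists W'; split=> [z /W'_sub[zcut zcs]|y yW ycs].
  split; first by apply: hull_hull zcut => a /(mem_cut (gsA c))[].
  move=> d; rewrite inE => /orP[/eqP ->|/zcs //].
  by apply: hull_affine_ge zcut => // a /(mem_cut (gsA c))[].
apply: W'_cover => [|d dcs]; last by apply: ycs; rewrite inE dcs orbT.
by apply: cut_cover => //; apply: ycs; rewrite mem_head.
Qed.

Section Rows.
Variables (R : realFieldType) (n : nat).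
Implicit Types (x y u w : 'rV[R]_n) (s : 'S_n).

Definition sorted_row y := forall i j : 'I_n, (i <= j)%N -> y 0 j <= y 0 i.

Definition prefix_sum y (m : nat) := \sum_(i < n | (i < m)%N) y 0 i.

Definition dominates u x :=
  (forall m, (m < n)%N -> prefix_sum x m <= prefix_sum u m) /\ prefix_sum u n = prefix_sum x n.

Lemma dominates_refl x : dominates x x.
Proof. by split. Qed.

Lemma dominates_trans y u x : dominates u y -> dominates y x -> dominates u x.
Proof.
move=> [dom_uy sum_uy] [dom_yx sum_yx]; split=> [m mn|]; last by rewrite sum_uy.
exact: le_trans (dom_yx m mn) (dom_uy m mn).
Qed.

Definition perms u z : Prop := exists s, z = u *m perm_mx s.

Lemma mulmx_perm_mxE y s i : (y *m perm_mx s) 0 i = y 0 (s^-1 i)%g.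
Proof. by rewrite -[s]invgK -col_permE mxE invgK. Qed.

Lemma mulmx_perm_mxK y s : y *m perm_mx s *m perm_mx s^-1 = y.
Proof. by rewrite -mulmxA -perm_mxM mulgV perm_mx1 mulmx1. Qed.

Lemma sortdesc_perm y s : sortdesc (y *m perm_mx s) = sortdesc y.
Proof.
rewrite /sortdesc; apply/perm_sortP; [exact: ge_total|exact: ge_trans|exact: ge_anti|].
have -> : [seq (y *m perm_mx s) 0 i | i <- enum 'I_n] =
          [seq y 0 i | i <- [seq (s^-1)%g i | i <- enum 'I_n]].
  by rewrite -[in RHS]map_comp; apply: eq_map => i /=; rewrite mulmx_perm_mxE.
apply: perm_map; apply: uniq_perm; first by rewrite map_inj_uniq ?enum_uniq //; apply: perm_inj.
  exact: enum_uniq.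
by move=> i; rewrite mem_enum inE; apply/mapP; exists (s i); rewrite ?mem_enum ?permK.
Qed.

Lemma sortdesc_sorted y : sorted_row y -> sortdesc y = [seq y 0 i | i <- enum 'I_n].
Proof.
move=> y_sorted; rewrite /sortdesc; apply: sorted_sort; first exact: ge_trans.
have : sorted (relpre val leq) (enum 'I_n) by rewrite -sorted_map val_enum_ord iota_sorted.
by rewrite sorted_map; apply: sub_sorted => i j /y_sorted.
Qed.

Lemma sorting_perm y : exists s, sorted_row (y *m perm_mx s).
Proof.
set L := [seq y 0 i | i <- enum 'I_n].
have L_size : size L == n by rewrite size_map size_enum_ord.
pose t := Tuple L_size.
have sortL : perm_eq (sort >=%O L) t by rewrite perm_sort.
have [p Lp] := tuple_permP sortL.
have sortedL : sorted >=%O (sort >=%O L) by apply: sort_sorted; exact: ge_total.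
have nthE (i : 'I_n) : nth 0 (sort >=%O L) i = y 0 (p i).
  rewrite Lp (nth_map i) ?size_enum_ord // nth_ord_enum (tnth_nth 0) /=.
  by rewrite (nth_map i) ?size_enum_ord // nth_ord_enum.
exists p^-1%g => i j ij; rewrite !mulmx_perm_mxE !invgK -!nthE.
apply: (sorted_leq_nth ge_trans ge_refl) => //; by rewrite inE size_sort size_map size_enum_ord.
Qed.

Lemma topsum_sorted y m : sorted_row y -> (m <= n)%N -> topsum y m = prefix_sum y m.
Proof.
move=> y_sorted mn; rewrite /topsum /prefix_sum (big_ord_widen _ _ mn).
apply: eq_bigr => i _; rewrite /xbr sortdesc_sorted // (nth_map i) ?size_enum_ord //.
by rewrite nth_ord_enum.
Qed.

Lemma majorizes_sortdesc u u' x x' :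
  sortdesc u = sortdesc u' -> sortdesc x = sortdesc x' -> majorizes u x -> majorizes u' x'.
Proof. by rewrite /majorizes /topsum /xbr => <- <-. Qed.

Lemma majorizes_sorted u x :
  sorted_row u -> sorted_row x -> majorizes u x <-> dominates u x.
Proof.
move=> u_sorted x_sorted.
have top_u m : (m <= n)%N -> topsum u m = prefix_sum u m by apply: topsum_sorted.
have top_x m : (m <= n)%N -> topsum x m = prefix_sum x m by apply: topsum_sorted.
rewrite /majorizes /dominates (top_u n (leqnn n)) (top_x n (leqnn n)).
split=> -[le_ux eq_n]; split=> // m mn; move: (le_ux m mn);
  by rewrite (top_u m (ltnW mn)) (top_x m (ltnW mn)).
Qed.

Lemma pt_comb t (T : finType) (l : T -> R) (p : T -> 'rV[R]_n) :
  \sum_i l i = 1 -> pt (\sum_i l i *: p i) t = \sum_i l i *: pt (p i) t.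
Proof.
move=> l_sum1; apply/rowP => i; rewrite summxE /pt.
case: (splitP i) => [j eij|j eij].
  rewrite (_ : i = lshift 1 j); last exact: val_inj.
  by rewrite row_mxEl summxE; apply: eq_bigr => k _; rewrite [LHS]mxE [RHS]mxE row_mxEl.
rewrite (_ : i = rshift n j); last exact: val_inj.
rewrite row_mxEr mxE -[LHS]mul1r -l_sum1 mulr_suml; apply: eq_bigr => k _.
by rewrite [RHS]mxE row_mxEr mxE.
Qed.

End Rows.

Section PrefixSums.
Variables (R : realFieldType) (n : nat).
Implicit Types (y z u : 'rV[R]_n).

Lemma prefix_sumD y z m : prefix_sum (y + z) m = prefix_sum y m + prefix_sum z m.
Proof. by rewrite /prefix_sum -big_split; apply: eq_bigr => i _; rewrite mxE. Qed.

Lemma prefix_sumB y z m : prefix_sum (y - z) m = prefix_sum y m - prefix_sum z m.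
Proof. by rewrite /prefix_sum -sumrB; apply: eq_bigr => i _; rewrite !mxE. Qed.

Lemma prefix_sumZ c y m : prefix_sum (c *: y) m = c * prefix_sum y m.
Proof. by rewrite /prefix_sum mulr_sumr; apply: eq_bigr => i _; rewrite mxE. Qed.

Lemma prefix_sum_delta (k : 'I_n) m : prefix_sum (delta_mx 0 k : 'rV[R]_n) m = (k < m)%:R.
Proof.
rewrite /prefix_sum big_mkcond (bigD1 k) //= big1 => [|i ik]; rewrite !mxE eqxx /=.
  by rewrite eqxx addr0; case: ifP.
by rewrite (negPf ik); case: ifP.
Qed.

Lemma prefix_sum_full y : prefix_sum y n = \sum_i y 0 i.
Proof. by apply: eq_bigl => i; rewrite ltn_ord. Qed.

Lemma prefix_sum_split y (j : 'I_n) m : (j < m)%N ->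
  prefix_sum y m = prefix_sum y j + y 0 j + \sum_(i < n | (j < i < m)%N) y 0 i.
Proof.
move=> jm; rewrite /prefix_sum (bigID (fun i : 'I_n => (i < j)%N)) /= -addrA; congr (_ + _).
  by apply: eq_bigl => i; apply/idP/idP; lia.
rewrite (bigD1 j) /=; last by rewrite jm ltnn.
by congr (_ + _); apply: eq_bigl => i; rewrite -(inj_eq val_inj) /=; apply/idP/idP; lia.
Qed.

Lemma prefix_sumS y (i : 'I_n) : prefix_sum y i.+1 = prefix_sum y i + y 0 i.
Proof. by rewrite (prefix_sum_split _ (ltnSn i)) big_pred0 ?addr0 // => k; lia. Qed.

Lemma dominates_sum_eq w u : dominates w u ->
  \sum_(m < n.+1) prefix_sum w m <= \sum_(m < n.+1) prefix_sum u m -> w = u.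
Proof.
move=> [dom_wu sum_wu] le_sum.
have le_m (m : 'I_n.+1) : 0 <= prefix_sum w m - prefix_sum u m.
  rewrite subr_ge0; case: (ltngtP m n) => [mn|nm|->]; [exact: dom_wu| |by rewrite sum_wu].
  by move: (ltn_ord m); rewrite ltnS leqNgt nm.
have eq_m (m : 'I_n.+1) : prefix_sum w m = prefix_sum u m.
  apply/eqP; rewrite -subr_eq0; apply/eqP; move: m isT.
  apply: psumr_eq0P => [m _|]; first exact: le_m.
  by apply/eqP; rewrite eq_le sumr_ge0 // andbT sumrB subr_le0.
apply/rowP => i; have i_lt : (i.+1 < n.+1)%N by rewrite ltnS.
have := eq_m (Ordinal i_lt); rewrite /= !prefix_sumS (eq_m (Ordinal (ltnW i_lt))).
exact: addrI.
Qed.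

Lemma affine_coord (i : 'I_n) : affine (fun y : 'rV[R]_n => y 0 i).
Proof. by move=> T l p l_sum1; rewrite summxE; apply: eq_bigr => t _; rewrite mxE. Qed.

Lemma affine_prefix_sum m : affine (fun y : 'rV[R]_n => prefix_sum y m).
Proof. exact: (@affine_sum _ _ _ (fun i : 'I_n => (i < m)%N) _ affine_coord). Qed.

Lemma transfer_convex u (j k : 'I_n) d : j != k -> u 0 j != u 0 k ->
  u + d *: (delta_mx 0 k - delta_mx 0 j) =
  (1 - d / (u 0 j - u 0 k)) *: u + (d / (u 0 j - u 0 k)) *: (u *m perm_mx (tperm j k)).
Proof.
move=> jk ujk; have ujk' : u 0 j - u 0 k != 0 by rewrite subr_eq0.
apply/rowP => i; have := mulmx_perm_mxE u (tperm j k) i; rewrite tpermV.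
move: (u *m _) => w wE; rewrite !mxE wE.
have [->|ij] := eqVneq i j; first by rewrite tpermL eqxx (negPf jk) /=; field.
have [->|ik] := eqVneq i k; first by rewrite tpermR eqxx /=; field.
by rewrite tpermD 1?eq_sym // !andbF subrr mulr0 addr0; ring.
Qed.

End PrefixSums.

Section Rado.
Variables (R : realFieldType) (n : nat) (x : 'rV[R]_n).
Hypothesis x_sorted : sorted_row x.
Implicit Types (u : 'rV[R]_n).

Definition mismatch u := [set i | u 0 i != x 0 i].

Lemma mismatch0 u : mismatch u = set0 -> u = x.
Proof.
move=> mis0; apply/rowP => i; apply/eqP; apply: contraT => uxi.
have : i \in mismatch u by rewrite inE.
by rewrite mis0 inE.
Qed.

Lemma rado_pivots u : mismatch u != set0 -> dominates u x ->
  exists j k : 'I_n, [/\ (j < k)%N, x 0 j < u 0 j, u 0 k < x 0 k &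
    forall i : 'I_n, (j < i < k)%N -> u 0 i = x 0 i].
Proof.
move=> /set0Pn[i0]; rewrite inE => ux_i0 [dom_ux sum_ux].
have [j0 xu_j0] : exists j0, x 0 j0 < u 0 j0.
  apply/existsP; apply: contraT; rewrite negb_exists => /forallP ux.
  have le_ux (i : 'I_n) : u 0 i <= x 0 i by rewrite leNgt ux.
  have : \sum_i u 0 i < \sum_i x 0 i.
    rewrite (bigD1 i0) //= [X in _ < X](bigD1 i0) //= ltr_leD ?ler_sum //.
    by rewrite lt_neqAle ux_i0 le_ux.
  by rewrite -!prefix_sum_full sum_ux ltxx.
have [j xu_j j_max] := @arg_maxnP _ j0 (fun i => x 0 i < u 0 i) val xu_j0.
have [k0 ux_k0] : exists k0 : 'I_n, (j < k0)%N && (u 0 k0 < x 0 k0).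
  apply/existsP; apply: contraT; rewrite negb_exists => /forallP xu.
  have eq_ux (i : 'I_n) : (j < i)%N -> u 0 i = x 0 i.
    move=> ji; apply: le_anti; apply/andP; split; last by move: (xu i); rewrite ji leNgt.
    by rewrite leNgt; apply/negP => /j_max /=; lia.
  have : prefix_sum (u - x) n = prefix_sum (u - x) j + (u - x) 0 j.
    rewrite (prefix_sum_split _ (ltn_ord j)) big1 ?addr0 // => i /andP[ji _].
    by rewrite !mxE eq_ux ?subrr.
  rewrite !prefix_sumB sum_ux subrr !mxE; have := dom_ux j (ltn_ord j); lra.
have [k /andP[jk ux_k] k_min] :=
  @arg_minnP _ k0 (fun i : 'I_n => (j < i)%N && (u 0 i < x 0 i)) val ux_k0.
exists j, k; split=> // i /andP[ji ik]; apply: le_anti; apply/andP; split.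
  by rewrite leNgt; apply/negP => /j_max /=; lia.
by rewrite leNgt; apply/negP => lt_ux; have /= := k_min i; rewrite ji lt_ux => /(_ isT); lia.
Qed.

Lemma dominates_transfer u (j k : 'I_n) d :
  (j < k)%N -> (forall i : 'I_n, (j < i < k)%N -> u 0 i = x 0 i) ->
  0 <= d <= u 0 j - x 0 j -> dominates u x ->
  dominates (u + d *: (delta_mx 0 k - delta_mx 0 j)) x.
Proof.
move=> jk eq_ux /andP[d_ge0 d_le] [dom_ux sum_ux].
have sumE m : prefix_sum (u + d *: (delta_mx 0 k - delta_mx 0 j)) m =
    prefix_sum u m + d * ((k < m)%:R - (j < m)%:R).
  by rewrite prefix_sumD prefix_sumZ prefix_sumB !prefix_sum_delta.
split=> [m mn|]; last by rewrite sumE !ltn_ord subrr mulr0 addr0.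
rewrite sumE; have [/andP[jm mk]|] := boolP ((j < m) && (m <= k))%N; last first.
  rewrite negb_and -leqNgt -ltnNge => jmk.
  have -> : (k < m)%N = (j < m)%N by apply/idP/idP; lia.
  by rewrite subrr mulr0 addr0 dom_ux.
rewrite ltnNge mk jm /= sub0r mulrN1.
have : prefix_sum (u - x) m = prefix_sum (u - x) j + (u 0 j - x 0 j).
  rewrite (prefix_sum_split _ jm) big1 ?addr0 ?mxE // => i /andP[ji im].
  by rewrite !mxE eq_ux ?subrr // ji (leq_trans im mk).
rewrite !prefix_sumB; have := dom_ux j (ltn_ord j); lra.
Qed.

Lemma rado_step u : mismatch u != set0 -> dominates u x ->
  exists2 u', mismatch u' \proper mismatch u /\ dominates u' x &
    forall s, hull (perms u) (u' *m perm_mx s).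
Proof.
move=> mis_u dom_ux.
have [j [k [jk xu_j ux_k eq_ux]]] := rado_pivots mis_u dom_ux.
have x_jk : x 0 k <= x 0 j by apply: x_sorted; apply: ltnW.
have j_neq_k : j != k by rewrite -(inj_eq val_inj) neq_ltn jk.
pose d := Num.min (u 0 j - x 0 j) (x 0 k - u 0 k).
have d_gt0 : 0 < d by rewrite lt_min !subr_gt0 xu_j ux_k.
have [d_le_j d_le_k] : d <= u 0 j - x 0 j /\ d <= x 0 k - u 0 k by rewrite !ge_min !lexx orbT.
pose u' := u + d *: (delta_mx 0 k - delta_mx 0 j).
have u'E (i : 'I_n) : u' 0 i = u 0 i + d * ((i == k)%:R - (i == j)%:R) by rewrite !mxE.
exists u'; first split.
- apply/properP; split.
    apply/subsetP => i; rewrite !inE u'E; apply: contraNneq => eq_ux_i.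
    have ij : i != j by apply: contraTneq xu_j => <-; rewrite eq_ux_i ltxx.
    have ik : i != k by apply: contraTneq ux_k => <-; rewrite eq_ux_i ltxx.
    by rewrite (negPf ij) (negPf ik) subrr mulr0 addr0 eq_ux_i.
  have [d_j|d_k] := leP (u 0 j - x 0 j) (x 0 k - u 0 k).
    exists j; first by rewrite inE gt_eqF.
    by rewrite inE negbK u'E eqxx (negPf j_neq_k) /d (min_l d_j) /=; apply/eqP; ring.
  exists k; first by rewrite inE lt_eqF.
  have k_neq_j : (k == j) = false by rewrite eq_sym (negPf j_neq_k).
  by rewrite inE negbK u'E eqxx k_neq_j /d (min_r (ltW d_k)) /=; apply/eqP; ring.
- by apply: dominates_transfer => //; rewrite ltW.
move=> s; rewrite /u' transfer_convex //; last by rewrite gt_eqF //; lra.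
rewrite mulmxDl -!scalemxAl -mulmxA -perm_mxM addrC.
apply: hull_segment; [|by exists (tperm j k * s)%g|by exists s].
have dd_gt0 : 0 < u 0 j - u 0 k by lra.
apply/andP; split; first by apply: divr_ge0; lra.
by rewrite ler_pdivrMr // mul1r; lra.
Qed.

Lemma rado u : dominates u x -> hull (perms u) x.
Proof.
move: {2}#|mismatch u| (leqnn #|mismatch u|) => m.
elim: m u => [|m IH] u mis_le dom_ux; have [mis0|mis_u] := eqVneq (mismatch u) set0;
  try by rewrite -{1}(mismatch0 mis0); apply: hull_mem; exists 1%g; rewrite perm_mx1 mulmx1.
  by move: mis_le; rewrite leqn0 cards_eq0 (negPf mis_u).
have [u' [proper_u' dom_u'x] hull_u'] := rado_step mis_u dom_ux.
have mis_u'_le : (#|mismatch u'| <= m)%N by rewrite -ltnS (leq_trans (proper_card proper_u')).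
by apply: hull_hull (IH u' mis_u'_le dom_u'x) => _ [s ->]; apply: hull_u'.
Qed.

End Rado.

Section SortedDominance.
Variables (R : realFieldType) (n : nat).
Implicit Types (xs y : 'rV[R]_n).

Definition sorted_dom_constraint xs (c : 'I_n * 'I_n + 'I_n + bool) y : R :=
  match c with
  | inl (inl (i, j)) => if (i <= j)%N then y 0 i - y 0 j else 0
  | inl (inr m) => prefix_sum y m - prefix_sum xs m
  | inr true => prefix_sum y n - prefix_sum xs n
  | inr false => prefix_sum xs n - prefix_sum y n
  end.

Lemma affine_sorted_dom_constraint xs c : affine (sorted_dom_constraint xs c).
Proof.
case: c => [[[i j]|m]|[]]; rewrite /sorted_dom_constraint.
- by case: (i <= j)%N; [apply: affineB; apply: affine_coord|apply: affine_cst].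
- by apply: affineB; [apply: affine_prefix_sum|apply: affine_cst].
- by apply: affineB; [apply: affine_prefix_sum|apply: affine_cst].
- by apply: affineB; [apply: affine_cst|apply: affine_prefix_sum].
Qed.

Lemma sorted_dom_constraintP xs y :
  (forall c, 0 <= sorted_dom_constraint xs c y) <-> sorted_row y /\ dominates y xs.
Proof.
rewrite /sorted_dom_constraint; split=> [ge0|[y_sorted [dom_yxs sum_yxs]]].
  split; first by move=> i j ij; have := ge0 (inl (inl (i, j))); rewrite ij subr_ge0.
  split=> [m mn|]; first by have := ge0 (inl (inr (Ordinal mn))); rewrite subr_ge0.
  have := ge0 (inr true); have := ge0 (inr false); rewrite !subr_ge0 => ge le.
  by apply/le_anti/andP.
move=> [[[i j]|m]|[]]; rewrite ?sum_yxs ?subrr //.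
  by case: ifP => ij; rewrite ?subr_ge0 ?y_sorted.
by rewrite subr_ge0 dom_yxs.
Qed.

End SortedDominance.

Section MajMaximal.
Variables (R : realFieldType) (n : nat) (P : 'rV[R]_n -> Prop).
Hypotheses (P_polytope : polytope P) (P_perm : perm_invariant P).
Implicit Types (x xs y u w : 'rV[R]_n).

Lemma polytope_hull_seq : exists W : seq 'rV[R]_n, forall y, P y <-> hull_seq W y.
Proof.
have [k [v Pv]] := P_polytope; exists [seq v i | i <- enum 'I_k] => y.
rewrite Pv convE; split; apply: sub_hull => a; first by move=> [i ->]; rewrite map_f ?mem_enum.
by move=> /mapP[i _ ->]; exists i.
Qed.

Lemma maj_maximal_perm u s : maj_maximal P u -> maj_maximal P (u *m perm_mx s).
Proof.
move=> [Pu u_max]; split=> [|[w [Pw [maj_wus sort_ne]]]]; first exact: P_perm.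
apply: u_max; exists w; split=> //; rewrite sortdesc_perm in sort_ne; split=> //.
exact: majorizes_sortdesc (sortdesc_perm u s) maj_wus.
Qed.

Lemma exists_maj_maximal xs : P xs -> sorted_row xs ->
  exists u, [/\ maj_maximal P u, sorted_row u & dominates u xs].
Proof.
move=> P_xs xs_sorted; have [W PW] := polytope_hull_seq.
have [W' [W'_sub W'_cover]] :=
  hull_halfspaces (enum {: 'I_n * 'I_n + 'I_n + bool}) W (affine_sorted_dom_constraint xs).
have W'P y : hull_seq W' y <-> [/\ P y, sorted_row y & dominates y xs].
  split=> [y_W'|[/PW y_W y_sorted y_dom]]; last first.
    have /sorted_dom_constraintP y_cons := conj y_sorted y_dom.
    by apply: W'_cover => // c _; apply: y_cons.
  have [y_sorted y_dom] : sorted_row y /\ dominates y xs.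
    apply/sorted_dom_constraintP => c; apply: hull_affine_ge y_W' => [|z /W'_sub[_]].
      exact: affine_sorted_dom_constraint.
    by apply; rewrite mem_enum.
  by split=> //; apply/PW; apply: hull_hull y_W' => z /W'_sub[].
pose F y := \sum_(m < n.+1) prefix_sum y m.
have FA : affine F by apply: affine_sum => m; apply: affine_prefix_sum.
have [u0 u0_W'] := hull_witness ((W'P xs).2 (And3 P_xs xs_sorted (dominates_refl xs))).
have [u u_W' u_max] := seq_argmax F u0_W'.
have [P_u u_sorted u_dom] := (W'P u).1 (hull_mem u_W').
exists u; split=> //; split=> // -[w [P_w [maj_wu sort_ne]]].
have [s ws_sorted] := sorting_perm w; set ws := w *m perm_mx s.
have ws_dom : dominates ws u.
  by apply/majorizes_sorted => //; apply: majorizes_sortdesc maj_wu; rewrite ?sortdesc_perm.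
have ws_W' : hull_seq W' ws.
  by apply/W'P; split; [exact: P_perm|exact: ws_sorted|exact: dominates_trans ws_dom u_dom].
have F_ws : F ws <= F u by apply: hull_affine_le ws_W' => // z /u_max.
by apply: sort_ne; rewrite -(sortdesc_perm w s) -/ws (dominates_sum_eq ws_dom F_ws).
Qed.

Lemma hull_maj_maximal x : P x -> hull (fun y => maj_maximal P y /\ majorizes y x) x.
Proof.
move=> P_x; have [s0 xs_sorted] := sorting_perm x; set xs := x *m perm_mx s0.
have [u [M_u u_sorted u_dom]] := exists_maj_maximal (P_perm s0 P_x) xs_sorted.
have perm_comb (T : finType) (l : T -> R) (p : T -> 'rV[R]_n) :
    \sum_i l i = 1 ->
    (\sum_i l i *: p i) *m perm_mx s0^-1 = \sum_i l i *: (p i *m perm_mx s0^-1).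
  by move=> _; rewrite mulmx_suml; apply: eq_bigr => i _; rewrite scalemxAl.
have := hull_map (f := fun y => y *m perm_mx s0^-1) perm_comb (rado xs_sorted u_dom).
rewrite mulmx_perm_mxK.
apply: sub_hull => _ [_ [s ->] ->]; rewrite -mulmxA -perm_mxM.
split; first exact: maj_maximal_perm.
apply: majorizes_sortdesc ((majorizes_sorted u_sorted xs_sorted).2 u_dom).
  by rewrite sortdesc_perm.
by rewrite sortdesc_perm.
Qed.

End MajMaximal.

Theorem mainTheorem12 (R : realFieldType) (n : nat) (P : 'rV[R]_n -> Prop)
  (phi : 'rV[R]_n -> R) (alpha : R) :
  polytope P -> perm_invariant P -> schur_concave_on P phi ->
  forall z : 'rV[R]_(n + 1),
    conv (episet P phi alpha) z <-> conv (episet (maj_maximal P) phi alpha) z.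
Proof.
move=> P_polytope P_perm phi_schur z; rewrite !convE; split; last first.
  by apply: sub_hull => _ [x [t [-> [[P_x _] le_phi_t]]]]; exists x, t.
apply: hull_hull => _ [x [t [-> [P_x [phi_x t_alpha]]]]].
have := hull_map (f := fun y : 'rV[R]_n => pt y t) (@pt_comb _ _ t)
  (hull_maj_maximal P_polytope P_perm P_x).
apply: sub_hull => _ [y [M_y maj_yx] ->]; exists y, t; split=> //; split=> //; split=> //.
by apply: le_trans phi_x; apply: phi_schur => //; case: M_y.
Qed.
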